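(* Let $G\in\mathfrak{Y}_n$ be a finite soluble non-nilpotent group, let $F$ be its Fitting subgroup, and let $p=|G:F|$ (a prime). Then the Sylow $p$-subgroups of $G$ are cyclic, and for every prime $r\neq p$ the Sylow $r$-subgroups of $G$ are abelian.
   Context: $\mathfrak{Y}_n$ denotes the class of all groups $G$ such that $N_G(A)=A$ for every non-abelian subgroup $A\le G$. The Fitting subgroup is the subgroup generated by all nilpotent normal subgroups. *)

From mathcomp Require Import all_boot all_fingroup all_solvable.
Set Implicit Arguments. Unset Strict Implicit. Unset Printing Implicit Defensive.
Local Open Scope group_scope.

Definition Yn (gT : finGroupType) (G : {group gT}) : Prop :=
  forall A : {group gT}, A \subset G -> ~~ abelian A -> 'N_G(A) = A.

From mathcomp Require Import all_boot all_fingroup all_solvable.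
Set Implicit Arguments.
Unset Strict Implicit.
Unset Printing Implicit Defensive.

Local Open Scope group_scope.

(* In a group of Y_n every proper normal subgroup is abelian (it equals its
   normaliser G), so the Fitting subgroup F of a non-nilpotent G is an abelian
   maximal normal subgroup, of prime index p when G is soluble.  A Sylow
   r-subgroup with r <> p then lies in F.  For a Sylow p-subgroup P, the
   p'-part Q of F is a normal complement to P; for x in P \ F the group Q<x>
   is non-abelian (otherwise G = F<x> centralises Q and P would be normal,
   hence inside F), so it is self-normalising, whence N_P(<x>) = <x> and
   <x> = P because normalisers grow in the p-group P. *)

Section GroupFacts.

Variable gT : finGroupType.
Implicit Types (pi : nat_pred) (G H M N P R : {group gT}) (x : gT).

Lemma nilpotent_sub_normI_eq P H :
  nilpotent P -> H \subset P -> 'N_P(H) \subset H -> H :=: P.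
Proof.
move=> nilP sHP sNH; case: (eqVproper sHP) => // prHP.
by have := nilpotent_proper_norm nilP prHP; rewrite properE sNH andbF.
Qed.

Lemma maximal_joing_cycle M G x :
  maximal M G -> x \in G -> x \notin M -> M <*> <[x]> = G.
Proof.
move=> /maxgroupP[/andP[sMG _] maxM] Gx Mx'.
have sMxG : M <*> <[x]> \subset G by rewrite join_subG sMG cycle_subG.
case: (eqVproper sMxG) => // prMxG.
have eMx := maxM (M <*> <[x]>)%G prMxG (joing_subl _ _).
by have := joing_subr M <[x]>; rewrite eMx cycle_subG (negPf Mx').
Qed.

Lemma Hall_sub_normal_p'index pi G N R :
  N <| G -> pi^'.-nat #|G : N| -> pi.-Hall(G) R -> R \subset N.
Proof.
move=> /andP[_ nNG] pi'GN hallR; have sRG := pHall_sub hallR.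
rewrite -quotient_sub1 ?(subset_trans sRG nNG) // subG1 trivg_card1.
have piRN : pi.-group (R / N) := quotient_pgroup _ (pHall_pgroup hallR).
have pi'RN : pi^'.-group (R / N).
  by apply: pgroupS (quotientS _ sRG) _; rewrite /pgroup card_quotient.
by rewrite (pnat_1 piRN pi'RN).
Qed.

Lemma p'core_normal_p'Hall pi G N :
  N <| G -> nilpotent N -> pi.-nat #|G : N| -> pi^'.-Hall(G) 'O_pi^'(N).
Proof.
move=> nsNG nilN piGN; have sNG := normal_sub nsNG.
have hallQ : pi^'.-Hall(N) 'O_pi^'(N) := nilpotent_pcore_Hall _ nilN.
rewrite /pHall (subset_trans (pcore_sub _ _) sNG) pcore_pgroup /=.
rewrite -(Lagrange_index sNG (pcore_sub _ _)) pnatM pnatNK piGN.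
by case/and3P: hallQ; rewrite pnatNK.
Qed.

End GroupFacts.

Section Yn.

Variables (gT : finGroupType) (G : {group gT}).
Hypotheses (YG : Yn G) (nnilG : ~~ nilpotent G).
Implicit Types (M R : {group gT}) (r : nat).

Lemma Yn_normal_proper_abelian M : M <| G -> M \proper G -> abelian M.
Proof.
move=> nsMG prMG; apply: contraR (proper_neq prMG) => nabM.
by rewrite -(YG (normal_sub nsMG) nabM) (setIidPl (normal_norm nsMG)).
Qed.

Lemma Fitting_proper_nonnilpotent : 'F(G) \proper G.
Proof.
rewrite properEneq Fitting_sub andbT.
by apply: contra nnilG => /eqP <-; apply: Fitting_nil.
Qed.

Lemma Yn_Fitting_abelian : abelian 'F(G).
Proof.
exact: Yn_normal_proper_abelian (Fitting_normal G) Fitting_proper_nonnilpotent.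
Qed.

Lemma Yn_Fitting_maxnormal : maxnormal 'F(G) G G.
Proof.
apply/maxgroupP; split; first by rewrite Fitting_proper_nonnilpotent gFnorm.
move=> M /andP[prMG nMG] sFM; apply/eqP; rewrite eqEsubset sFM andbT.
have nsMG : M <| G by rewrite /normal proper_sub.
have nilM := abelian_nil (Yn_normal_proper_abelian nsMG prMG).
exact: Fitting_max nsMG nilM.
Qed.

Hypothesis solG : solvable G.

Local Notation p := #|G : 'F(G)|.
Local Notation Q := 'O_p^'('F(G)).

Lemma Yn_Fitting_index_prime : prime p.
Proof. exact: index_maxnormal_sol_prime solG Yn_Fitting_maxnormal. Qed.

Lemma Yn_Sylow_p'index_abelian r R : r != p -> r.-Sylow(G) R -> abelian R.
Proof.
move=> neq_rp sylR; apply: abelianS Yn_Fitting_abelian.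
apply: Hall_sub_normal_p'index (Fitting_normal G) _ sylR.
by rewrite pnatE ?Yn_Fitting_index_prime // !inE eq_sym.
Qed.

Variable P : {group gT}.
Hypothesis sylP : p.-Sylow(G) P.

Lemma Yn_p'core_Fitting_sdprod : Q ><| P = G.
Proof.
have nsQG : Q <| G := gFnormal_trans _ (Fitting_normal G).
apply/(sdprod_normal_pHallP nsQG sylP)/p'core_normal_p'Hall.
- exact: Fitting_normal.
- exact: Fitting_nil.
- exact/pnat_id/Yn_Fitting_index_prime.
Qed.

Lemma Yn_cycle_not_cent_p'core y :
  y \in P -> y \notin 'F(G) -> ~~ (<[y]> \subset 'C(Q)).
Proof.
move=> Py Fy'; apply/negP => cQy.
have sPG := pHall_sub sylP; have [_ QPG _ _] := sdprodP Yn_p'core_Fitting_sdprod.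
have maxF := p_index_maximal (Fitting_sub G) Yn_Fitting_index_prime.
have cQG : G \subset 'C(Q).
  have cQFy : 'F(G) <*> <[y]> \subset 'C(Q).
    by rewrite join_subG cQy andbT (sub_abelian_cent2 Yn_Fitting_abelian) ?pcore_sub.
  by rewrite (maximal_joing_cycle maxF (subsetP sPG y Py) Fy') in cQFy.
have nPG : G \subset 'N(P).
  rewrite -QPG mul_subG ?normG // cents_norm // centsC.
  exact: subset_trans sPG cQG.
have sPF : P \subset 'F(G).
  by apply: Fitting_max; [rewrite /normal sPG | exact: pgroup_nil (pHall_pgroup sylP)].
by rewrite (subsetP sPF y Py) in Fy'.
Qed.

Lemma Yn_Sylow_Fitting_index_cyclic : cyclic P.
Proof.
have sPG := pHall_sub sylP; have [_ _ nQP tiQP] := sdprodP Yn_p'core_Fitting_sdprod.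
have /subsetPn[x Px Fx'] : ~~ (P \subset 'F(G)).
  apply/negP => sPF; have /and3P[_ _ p'GP] := sylP.
  have := pnat_dvd (indexgS G sPF) p'GP.
  by rewrite pnatE ?Yn_Fitting_index_prime // !inE eqxx.
have sxP : <[x]> \subset P by rewrite cycle_subG.
have nQx : <[x]> \subset 'N(Q) by rewrite cycle_subG (subsetP nQP).
pose A := (Q <*> <[x]>)%G.
have sAG : A \subset G.
  by rewrite join_subG (subset_trans (pcore_sub _ _) (Fitting_sub G)) (subset_trans sxP).
have nabA : ~~ abelian A.
  apply: contra (Yn_cycle_not_cent_p'core Px Fx') => abA.
  exact: sub_abelian_cent2 abA (joing_subr _ _) (joing_subl _ _).
have PA : P :&: A = <[x]>.
  by rewrite /= norm_joinEr // -group_modr // setIC tiQP mul1g.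
have sNx : 'N_P(<[x]>) \subset <[x]>.
  rewrite -{2}PA subsetI subsetIl -(YG sAG nabA) subsetI.
  rewrite (subset_trans (subsetIl _ _) sPG) normsY ?subsetIr //.
  exact: subset_trans (subsetIl _ _) nQP.
have nilP := pgroup_nil (pHall_pgroup sylP).
by rewrite -(nilpotent_sub_normI_eq nilP sxP sNx) cycle_cyclic.
Qed.

End Yn.

Theorem lemma2p7 (gT : finGroupType) (G : {group gT}) :
  Yn G -> solvable G -> ~~ nilpotent G ->
  let p := #|G : 'F(G)| in
  (forall P : {group gT}, P \in 'Syl_p(G) -> cyclic P) /\
  (forall (r : nat) (R : {group gT}), prime r -> r != p ->
     R \in 'Syl_r(G) -> abelian R).
Proof.
move=> YG solG nnilG p; split=> [P | r R _ neq_rp]; rewrite inE => sylS.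
  exact: (Yn_Sylow_Fitting_index_cyclic YG nnilG solG sylS).
exact: (Yn_Sylow_p'index_abelian YG nnilG solG neq_rp sylS).
Qed.
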